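(* If $H$ is a non-complete graph that has a universal vertex (a vertex adjacent to all other vertices), then $H$ is not an $\operatorname{IR}$-graph.
   Context: All graphs are finite and simple. For $G=(V,E)$, $D\subseteq V$, $v\in D$: $\operatorname{PN}(v,D)=N[v]-N[D-\{v\}]$ (closed neighbourhoods). $D$ is irredundant if $\operatorname{PN}(v,D)\neq\varnothing$ for all $v\in D$; $\operatorname{IR}(G)$ is the maximum size of an irredundant set; an $\operatorname{IR}(G)$-set is an irredundant set of that size. $G(\operatorname{IR})$ has the $\operatorname{IR}(G)$-sets as vertices, with $D\sim D'$ iff there exist $u\in D$, $v\in D'$ with $uv\in E(G)$ and $D'=(D-\{u\})\cup\{v\}$. A graph $H$ is an $\operatorname{IR}$-graph if $H\cong G(\operatorname{IR})$ for some graph $G$. *)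

(* A finite simple graph is a symmetric irreflexive
   relation e on a finType T. *)
From mathcomp Require Import all_boot.
Set Implicit Arguments. Unset Strict Implicit. Unset Printing Implicit Defensive.

Section IR.
Variables (T : finType) (e : rel T).

Definition cnbhd (v : T) : {set T} := [set x | (x == v) || e v x].
Definition cnbhds (S : {set T}) : {set T} := \bigcup_(y in S) cnbhd y.
Definition PN (v : T) (D : {set T}) : {set T} := cnbhd v :\: cnbhds (D :\ v).
Definition irredundant (D : {set T}) : bool := [forall v in D, PN v D != set0].
Definition IR : nat := \max_(D : {set T} | irredundant D) #|D|.
Definition IRset (D : {set T}) : bool := irredundant D && (#|D| == IR).
Definition IRadj (D D' : {set T}) : bool :=
  [exists u in D, exists v in D', e u v && (D' == (D :\ u) :|: [set v])].
End IR.

Definition iso_to_IRgraph (V : finType) (h : rel V) (T : finType) (e : rel T) : Prop :=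
  exists f : V -> {set T},
    injective f /\ (forall D, IRset e D <-> exists x, f x = D)
    /\ (forall x y, h x y = IRadj e (f x) (f y)).

Definition IRgraph (V : finType) (h : rel V) : Prop :=
  exists (T : finType) (e : rel T), symmetric e /\ irreflexive e /\ iso_to_IRgraph h e.

From mathcomp Require Import all_boot.

Set Implicit Arguments. Unset Strict Implicit. Unset Printing Implicit Defensive.

(* Let D be the IR-set of the universal vertex; every other IR-set is then
   D - a + a' with a' outside D. Replacing each vertex of an IR-set by one of
   its private neighbours yields again an IR-set, so no IR-set has private
   neighbours outside D at two distinct vertices. It follows that a neighbour
   D - a + a' of D has a' in PN(a, D), and that two neighbours D - a + a',
   D - b + b' of D have a = b. If a' and b' were non-adjacent, then
   D - a + a' + b' would be independent, hence irredundant, of size IR(G) + 1;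
   so a' b' is an edge and the two neighbours are adjacent in G(IR). *)

Section Irredundance.
Variables (T : finType) (e : rel T).
Hypotheses (e_sym : symmetric e) (e_irr : irreflexive e).

Lemma in_cnbhd x v : (x \in cnbhd e v) = (x == v) || e v x.
Proof. by rewrite inE. Qed.

Lemma cnbhd_refl x : x \in cnbhd e x.
Proof. by rewrite in_cnbhd eqxx. Qed.

Lemma cnbhdC x y : (x \in cnbhd e y) = (y \in cnbhd e x).
Proof. by rewrite !in_cnbhd eq_sym e_sym. Qed.

Lemma PNP v (D : {set T}) q :
  reflect (q \in cnbhd e v /\ {in D, forall y, y != v -> q \notin cnbhd e y})
          (q \in PN e v D).
Proof.
rewrite in_setD; apply: (iffP andP) => [[qN qv] | [qv qN]]; split=> //.
- move=> y yD yv; apply: contra qN => qy.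
  by apply/bigcupP; exists y; rewrite // in_setD1 yv.
- by apply/bigcupP=> -[y /setD1P[yv yD]]; apply/negP/qN.
Qed.

Lemma irredundantP (D : {set T}) :
  reflect {in D, forall v, exists q, q \in PN e v D} (irredundant e D).
Proof. by apply: (iffP forall_inP) => irrD v /irrD /set0Pn. Qed.

Lemma PN_self v (D : {set T}) q : q \in PN e v D -> q \in D -> q = v.
Proof.
case/PNP=> _ qnot qD; apply/eqP; apply: contraTT (cnbhd_refl q).
exact: qnot.
Qed.

Lemma PN_inj u v (D : {set T}) q : q \in PN e u D -> q \in PN e v D -> v \in D -> u = v.
Proof.
case/PNP=> _ qnot /PNP[qv _] vD; apply/eqP; apply: contraTT qv.
by rewrite eq_sym; apply: qnot.
Qed.

Lemma irredundant_leq_IR (D : {set T}) : irredundant e D -> #|D| <= IR e.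
Proof. exact: (@leq_bigmax_cond _ (irredundant e) (fun D : {set T} => #|D|)). Qed.

Lemma private_choice (D : {set T}) :
  irredundant e D -> exists p : T -> T, {in D, forall v, p v \in PN e v D}.
Proof.
move/irredundantP=> irrD.
suff /fin_all_exists[p pP] : forall v, exists q, v \in D -> q \in PN e v D.
  by exists p.
move=> v; have [/irrD[q qP] | vD] := boolP (v \in D); first by exists q.
by exists v.
Qed.

Lemma IRset_imset_private (D : {set T}) (p : T -> T) :
  IRset e D -> {in D, forall v, p v \in PN e v D} -> IRset e (p @: D).
Proof.
case/andP=> _ /eqP cardD pP.
have p_inj : {in D &, injective p}.
  by move=> u v uD vD puv; apply: (PN_inj (pP u uD)); rewrite ?puv ?pP.
rewrite /IRset card_in_imset // cardD eqxx andbT.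
apply/irredundantP => _ /imsetP[v vD ->]; exists v; apply/PNP; split.
  by rewrite cnbhdC; case/PNP: (pP v vD).
move=> _ /imsetP[u uD ->] puv; rewrite cnbhdC.
by case/PNP: (pP u uD) => _; apply=> //; apply: contraNneq puv => ->.
Qed.

Lemma IRset_private_pair (D : {set T}) d1 d2 q1 q2 :
  IRset e D -> d1 \in D -> d2 \in D -> d1 != d2 ->
  q1 \in PN e d1 D -> q2 \in PN e d2 D ->
  exists2 W, IRset e W & [/\ q1 \in W, q2 \in W & q1 != q2].
Proof.
move=> IRD d1D d2D d12 q1P q2P.
have [p pP] := private_choice (andP IRD).1.
pose p' v := if v == d1 then q1 else if v == d2 then q2 else p v.
have p'P : {in D, forall v, p' v \in PN e v D}.
  by move=> v vD; rewrite /p'; do 2?case: eqP => [-> //|_]; apply: pP.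
have p'd1 : p' d1 = q1 by rewrite /p' eqxx.
have p'd2 : p' d2 = q2 by rewrite /p' eq_sym (negbTE d12) eqxx.
exists (p' @: D); first exact: IRset_imset_private.
split; [rewrite -p'd1; exact: imset_f | rewrite -p'd2; exact: imset_f |].
by apply: contraNneq d12 => q12; apply/eqP/(PN_inj q1P _ d2D); rewrite q12.
Qed.

Lemma IRadj_swap (D A : {set T}) : IRset e D -> IRset e A -> IRadj e D A ->
  exists a a', [/\ a \in D, a' \notin D, e a a' & A = D :\ a :|: [set a']].
Proof.
move=> /andP[_ /eqP cardD] /andP[_ /eqP cardA].
case/exists_inP=> a aD /exists_inP[a' _ /andP[eaa' /eqP defA]].
exists a, a'; split=> //; apply/negP => a'D.
have a'a : a' != a by apply: contraTneq eaa' => ->; rewrite e_irr.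
suff : #|A| < #|D| by rewrite cardA cardD ltnn.
rewrite defA (cardsD1 a D) aD add1n ltnS subset_leq_card //.
by rewrite subUset subxx sub1set in_setD1 a'a a'D.
Qed.

Definition stable (S : {set T}) : Prop := {in S &, forall x y, ~~ e x y}.

Lemma stable_PN_self (S : {set T}) v : stable S -> v \in S -> v \in PN e v S.
Proof.
move=> stS vS; apply/PNP; split=> [|y yS yv]; first exact: cnbhd_refl.
by rewrite in_cnbhd negb_or eq_sym yv stS.
Qed.

Lemma stable_irredundant (S : {set T}) : stable S -> irredundant e S.
Proof. by move=> stS; apply/irredundantP => v vS; exists v; apply: stable_PN_self. Qed.

Lemma stableU1 (S : {set T}) q : stable S -> {in S, forall y, ~~ e q y} -> stable (q |: S).
Proof.
move=> stS qS x y /setU1P[-> | xS] /setU1P[-> | yS].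
- by rewrite e_irr.
- exact: qS.
- by rewrite e_sym qS.
- exact: stS.
Qed.

Lemma stable_of_PN_self (S X : {set T}) c : S \subset X ->
  {in S, forall z, z != c -> z \in PN e z X} -> stable S.
Proof.
move/subsetP=> SX selfS.
have nadj x y : x \in S -> y \in S -> y != c -> ~~ e x y.
  move=> xS yS yc; have [-> | xy] := eqVneq x y; first by rewrite e_irr.
  case/PNP: (selfS y yS yc) => _ /(_ x (SX x xS) xy).
  by rewrite in_cnbhd negb_or => /andP[].
move=> x y xS yS; have [yc | ] := eqVneq y c; last exact: nadj.
have [-> | xy] := eqVneq x y; first by rewrite e_irr.
by rewrite e_sym; apply: nadj => //; rewrite -yc.
Qed.

Definition IRuniversal (D : {set T}) : Prop :=
  IRset e D /\ forall W, IRset e W -> W != D -> IRadj e D W.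

Section Universal.
Variable D : {set T}.
Hypothesis univD : IRuniversal D.

Lemma IRset_outside_uniq (W : {set T}) u v : IRset e W ->
  u \in W -> v \in W -> u \notin D -> v \notin D -> u = v.
Proof.
case: univD => _ adjD IRW.
have [-> uD | WD] := eqVneq W D; first by rewrite uD.
case/exists_inP: (adjD W IRW WD) => a _ /exists_inP[a' _ /andP[_ /eqP ->]].
by rewrite !inE => /orP[/andP[_ ->] | /eqP ->] // /orP[/andP[_ ->] | /eqP ->].
Qed.

Lemma private_outside_uniq (X : {set T}) d1 d2 q1 q2 : IRset e X -> d1 \in X -> d2 \in X ->
  q1 \in PN e d1 X -> q2 \in PN e d2 X -> q1 \notin D -> q2 \notin D -> d1 = d2.
Proof.
move=> IRX d1X d2X q1P q2P q1D q2D; have [// | d12] := eqVneq d1 d2.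
have [W IRW [q1W q2W]] := IRset_private_pair IRX d1X d2X d12 q1P q2P.
by rewrite (IRset_outside_uniq IRW q1W q2W q1D q2D) eqxx.
Qed.

Lemma swap_IRset_private a a' : a \in D -> a' \notin D -> e a a' ->
  IRset e (D :\ a :|: [set a']) -> a' \in PN e a D.
Proof.
move=> aD a'D eaa' IRA; set A := D :\ a :|: [set a'] in IRA.
(* If a' were adjacent to some d in D - a, trading d for a private neighbour q
   of d in A would give an independent IR-set containing q and a', both outside
   D. *)
apply/PNP; split; first by rewrite in_cnbhd eaa' orbT.
move=> d dD da; apply/negP => a'd.
have dA : d \in A by rewrite in_setU in_setD1 da dD.
have a'A : a' \in A by rewrite in_setU set11 orbT.
have a'd' : a' != d by apply: contraNneq a'D => ->.
have aN : a \in cnbhd e a' by rewrite in_cnbhd e_sym eaa' orbT.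
have /irredundantP/(_ d dA)[q qP] := (andP IRA).1.
have qa' : q \notin cnbhd e a' by case/PNP: qP => _; apply.
have qD : q \notin D.
  apply: contra qa' => qD; have [-> // | qa] := eqVneq q a.
  have qA : q \in A by rewrite in_setU in_setD1 qa qD.
  by rewrite (PN_self qP qA) cnbhdC.
have selfA : {in A :\ d, forall z, z != a' -> z \in PN e z A}.
  move=> z /setD1P[zd zA] za'.
  have /irredundantP/(_ z zA)[r rP] := (andP IRA).1.
  have rD : r \in D.
    apply: contraT => rD.
    by rewrite (private_outside_uniq IRA zA dA rP qP rD qD) eqxx in zd.
  have ra : r != a.
    apply/eqP => ra; case/PNP: rP => _ /(_ a' a'A).
    by rewrite eq_sym za' ra aN => /(_ isT).
  have rA : r \in A by rewrite in_setU in_setD1 ra rD.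
  by rewrite -{1}(PN_self rP rA).
have stAd : stable (A :\ d) := stable_of_PN_self (subD1set A d) selfA.
have stW : stable (q |: (A :\ d)).
  apply: stableU1 => // y /setD1P[yd yA].
  by case/PNP: qP => _ /(_ y yA yd); rewrite cnbhdC in_cnbhd negb_or => /andP[].
have qAd : q \notin A :\ d.
  by apply/negP => /setD1P[qd qA]; rewrite (PN_self qP qA) eqxx in qd.
have IRW : IRset e (q |: (A :\ d)).
  case/andP: IRA => _ /eqP cardA; apply/andP; split; first exact: stable_irredundant.
  by rewrite cardsU1 qAd -cardA (cardsD1 d A) dA.
have qW : q \in q |: (A :\ d) by rewrite setU11.
have a'W : a' \in q |: (A :\ d) by rewrite in_setU1 in_setD1 a'd' a'A orbT.
by move: qa'; rewrite (IRset_outside_uniq IRW qW a'W qD a'D) cnbhd_refl.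
Qed.

Lemma private_outside_adj a a' b' : a \in D ->
  a' \in PN e a D -> b' \in PN e a D -> a' \notin D -> b' \notin D -> a' != b' ->
  e a' b'.
Proof.
move=> aD a'P b'P a'D b'D a'b'; apply: contraT => na'b'.
have [IRD _] := univD; case/andP: (IRD) => irrD /eqP cardD.
have selfD : {in D :\ a, forall z, z != a -> z \in PN e z D}.
  move=> z /setD1P[za zD] _; have /irredundantP/(_ z zD)[r rP] := irrD.
  have rD : r \in D.
    apply: contraT => rD.
    by rewrite (private_outside_uniq IRD aD zD a'P rP a'D rD) eqxx in za.
  by rewrite -{1}(PN_self rP rD).
have stDa : stable (D :\ a) := stable_of_PN_self (subD1set D a) selfD.
have nadj x : x \in PN e a D -> {in D :\ a, forall y, ~~ e x y}.
  move=> xP y /setD1P[ya yD]; case/PNP: xP => _ /(_ y yD ya).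
  by rewrite in_cnbhd negb_or e_sym => /andP[].
have stW : stable (b' |: (a' |: (D :\ a))).
  apply: stableU1; first exact: stableU1 (nadj _ a'P).
  by move=> y /setU1P[-> | ]; [rewrite e_sym | apply: nadj].
have := irredundant_leq_IR (stable_irredundant stW).
rewrite !cardsU1 !in_setU1 !in_setD1 (negbTE a'D) (negbTE b'D) (eq_sym b').
by rewrite (negbTE a'b') !andbF -cardD (cardsD1 a D) aD ltnn.
Qed.

Lemma universal_neighbours_adjacent A B : IRset e A -> IRset e B ->
  IRadj e D A -> IRadj e D B -> A != B -> IRadj e A B.
Proof.
have [IRD _] := univD; move=> IRA IRB.
case/(IRadj_swap IRD IRA)=> a [a' [aD a'D eaa' defA]].
case/(IRadj_swap IRD IRB)=> b [b' [bD b'D ebb' defB]] AB.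
have a'P : a' \in PN e a D by apply: swap_IRset_private; rewrite -?defA.
have b'P : b' \in PN e b D by apply: swap_IRset_private; rewrite -?defB.
have ab := private_outside_uniq IRD aD bD a'P b'P a'D b'D; subst b.
have a'b' : a' != b' by apply: contraNneq AB => a'b'; rewrite defA defB a'b'.
apply/exists_inP; exists a'; first by rewrite defA in_setU set11 orbT.
apply/exists_inP; exists b'; first by rewrite defB in_setU set11 orbT.
rewrite (private_outside_adj aD a'P b'P) //=; apply/eqP/setP => x.
rewrite defA defB !inE.
by case: (eqVneq x a') => [->|]; rewrite ?(negbTE a'D) ?andbF ?orbF.
Qed.

End Universal.
End Irredundance.

Theorem proposition4p7 (V : finType) (h : rel V) :
  symmetric h -> irreflexive h ->
  (exists x y : V, x != y /\ ~~ h x y) ->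
  (exists w : V, forall x, x != w -> h w x) ->
  ~ IRgraph h.
Proof.
move=> h_sym h_irr [x [y [xy nhxy]]] [w hw].
move=> [T [e [e_sym [e_irr [f [f_inj [f_IR f_adj]]]]]]].
have IRf z : IRset e (f z) by apply/f_IR; exists z.
have univ : IRuniversal e (f w).
  split=> [|_ /f_IR[z <-] zw]; first exact: IRf.
  by rewrite -f_adj hw //; apply: contraNneq zw => ->.
have xw : x != w by apply: contraNneq nhxy => xw; rewrite xw hw // eq_sym -xw.
have yw : y != w by apply: contraNneq nhxy => yw; rewrite yw h_sym hw.
move/negP: nhxy; apply; rewrite f_adj.
apply: (universal_neighbours_adjacent e_sym e_irr univ (IRf x) (IRf y)).
- by rewrite -f_adj hw.
- by rewrite -f_adj hw.
- by apply: contra xy => /eqP/f_inj ->.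
Qed.
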